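(* Let $\kappa$ be a regular uncountable cardinal. Suppose that $\curlywedge^-(\sigma,\kappa,NS_\kappa|S)$ holds, where $\sigma$ is a regular uncountable cardinal less than $\kappa$ and $S$ is a stationary subset of $E^\kappa_{<\sigma}$. Then $\mathrm{cov}(\kappa,\sigma,\sigma,2)=\kappa$.
   Context: $acc(\kappa)$ is the set of nonzero limit ordinals below $\kappa$; $E^\kappa_{<\sigma} = \{\alpha\in acc(\kappa) : \mathrm{cf}(\alpha)<\sigma\}$; $NS_\kappa|S = \{B\subseteq\kappa : B\cap S\text{ nonstationary}\}$, with $(NS_\kappa|S)^+$ its complement in $P(\kappa)$. $P_\rho(X)=\{x\subseteq X:|x|<\rho\}$. For an infinite cardinal $\sigma$ and a limit ordinal $\delta\geq\sigma$, a subset $C$ of $P_\sigma(\delta)$ is a generalized club if there is $F:P_\omega(\delta)\to\delta$ with $\{x\in P_\sigma(\delta):F``P_\omega(x)\subseteq x\}\subseteq C$. $\curlywedge^-(\sigma,\kappa,J)$ asserts the existence, for $i\in\delta\in acc(\kappa)\setminus\sigma$, of a cofinal subset $C^i_\delta$ of $(P_\sigma(\delta),\subseteq)$ such that $\{\delta:\exists i<\delta\,(C^i_\delta\subseteq D)\}\in J^+$ for every generalized club $D\subseteq P_\sigma(\kappa)$. For cardinals $\rho_1\geq\rho_2\geq\rho_3\geq\omega$, $\rho_3\geq\rho_4\geq2$, $\mathrm{cov}(\rho_1,\rho_2,\rho_3,\rho_4)$ is the least cardinality of $Z\subseteq P_{\rho_2}(\rho_1)$ such that every $a\in P_{\rho_3}(\rho_1)$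 is covered by the union of some $Q\in P_{\rho_4}(Z)$. *)

From mathcomp Require Import all_boot.
From mathcomp Require Import boolp classical_sets cardinality.
Set Implicit Arguments. Unset Strict Implicit. Unset Printing Implicit Defensive.
Local Open Scope classical_set_scope.
Local Open Scope card_scope.

(* Ordinals below kappa are modelled by the elements of a type T equipped with
   a strict well-order [lt]; an ordinal alpha < kappa is identified with its
   initial segment [seg lt a]. *)

Definition is_wellorder (T : Type) (lt : T -> T -> Prop) :=
  well_founded lt /\
  (forall x y z, lt x y -> lt y z -> lt x z) /\
  (forall x y, x = y \/ lt x y \/ lt y x).

Definition seg (T : Type) (lt : T -> T -> Prop) (a : T) : set T := [set x | lt x a].

Definition card_lt (T U : Type) (A : set T) (B : set U) := A #<= B /\ ~ (B #<= A).

Definition cofinal_in (T : Type) (lt : T -> T -> Prop) (A B : set T) :=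
  A `<=` B /\ forall b, B b -> exists2 a, A a & (b = a \/ lt b a).

Definition is_cardinal (T : Type) (lt : T -> T -> Prop) (X : set T) :=
  forall t, X t -> ~ (seg lt t #= X).

Definition regular_card (T : Type) (lt : T -> T -> Prop) (X : set T) :=
  is_cardinal lt X /\ forall A, cofinal_in lt A X -> A #= X.

Definition is_limit (T : Type) (lt : T -> T -> Prop) (d : T) :=
  (exists b, lt b d) /\ forall b, lt b d -> exists2 g, lt b g & lt g d.

(* E^kappa_{<sigma}, sigma represented by the element s *)
Definition E_lt (T : Type) (lt : T -> T -> Prop) (s : T) : set T :=
  [set d | is_limit lt d /\
     exists A, cofinal_in lt A (seg lt d) /\ card_lt A (seg lt s)].

Definition club (T : Type) (lt : T -> T -> Prop) (C : set T) :=
  cofinal_in lt C setT /\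
  forall d, is_limit lt d -> cofinal_in lt (C `&` seg lt d) (seg lt d) -> C d.

Definition stationary (T : Type) (lt : T -> T -> Prop) (S : set T) :=
  forall C, club lt C -> S `&` C !=set0.

Definition P_lt (T U : Type) (R : set U) (X : set T) : set (set T) :=
  [set x | x `<=` X /\ card_lt x R].

Definition cofinal_family (T : Type) (C Y : set (set T)) :=
  C `<=` Y /\ forall y, Y y -> exists2 c, C c & y `<=` c.

Definition gen_club (T U : Type) (R : set U) (X : set T) (D : set (set T)) :=
  exists F : set T -> T,
    (forall e, finite_set e -> e `<=` X -> X (F e)) /\
    [set x | P_lt R X x /\ forall e, finite_set e -> e `<=` x -> x (F e)] `<=` D.

(* curlywedge^-(sigma, kappa, NS_kappa | S) ; J^+ for J = NS_kappa|S means
   "meets S in a stationary set" *)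
Definition curlywedge_minus_NS (T : Type) (lt : T -> T -> Prop) (s : T) (S : set T) :=
  exists Cf : T -> T -> set (set T),
    (forall d i, is_limit lt d -> ~ lt d s -> lt i d ->
        cofinal_family (Cf d i) (P_lt (seg lt s) (seg lt d))) /\
    (forall D, D `<=` P_lt (seg lt s) (@setT T) -> gen_club (seg lt s) (@setT T) D ->
        stationary lt ([set d | is_limit lt d /\ ~ lt d s /\
                                exists2 i, lt i d & Cf d i `<=` D] `&` S)).

Definition cov_family (T U2 U3 U4 : Type) (X : set T) (R2 : set U2) (R3 : set U3)
    (R4 : set U4) (Z : set (set T)) :=
  Z `<=` P_lt R2 X /\
  forall a, P_lt R3 X a -> exists Q, P_lt R4 Z Q /\ a `<=` \bigcup_(q in Q) q.

Definition cov_eq (T U2 U3 U4 V : Type) (X : set T) (R2 : set U2) (R3 : set U3)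
    (R4 : set U4) (W : set V) :=
  (exists Z, cov_family X R2 R3 R4 Z /\ Z #= W) /\
  (forall Z, cov_family X R2 R3 R4 Z -> W #<= Z).

(* Lower bound: fewer than kappa sets, each of size < sigma < kappa, have a
   bounded union since kappa is regular, so they miss some singleton.
   Upper bound: by regularity of sigma every a in P_sigma(kappa) is contained
   in an image g[theta] of some theta < sigma.  Let F send each singleton
   {xi} to g(xi); the principle gives d, i such that every member of C^i_d is
   closed under F, and any such member containing theta contains a.  Choosing
   one member of C^i_d above theta for each triple (d, i, theta) yields a
   cofinal family of size at most |kappa^3| = kappa, where kappa x kappa
   injects into kappa by recursion along Goedel's well-order of pairs. *)

From mathcomp Require Import all_boot.
From mathcomp Require Import boolp classical_sets cardinality.
Local Open Scope classical_set_scope.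
Local Open Scope card_scope.

Lemma card_lt_small (T : Type) (A R : set T) : card_lt A R -> ~ ([set: T] #<= A).
Proof. by move=> [_ nRA] ge; apply/nRA/(card_le_trans (card_leT R) ge). Qed.

Lemma singleton_extension {U V : Type} (v0 : V) (g : U -> V) :
  exists F : set U -> V, forall u, F [set u] = g u.
Proof.
have /choice [F FP] : forall e : set U, exists v, forall u, e = [set u] -> v = g u.
  move=> e; have [[u ->]|none] := pselect (exists u, e = [set u]).
    by exists (g u) => u' eu; have -> : u = u' by rewrite -[u = u']/([set u'] u) -eu.
  by exists v0 => u eu; case: none; exists u.
by exists F => u; exact: FP.
Qed.

Section WellOrder.
Context {T : Type} {lt : T -> T -> Prop}.
Hypothesis wo : is_wellorder lt.

Lemma lt_irrefl x : ~ lt x x.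
Proof. case: wo => wf _; elim: (wf x) => y _ IH H; exact: (IH y H H). Qed.

Lemma lt_trans {x y z} : lt x y -> lt y z -> lt x z.
Proof. by case: wo => _ [tr _]; apply: tr. Qed.

Lemma lt_total x y : x = y \/ lt x y \/ lt y x.
Proof. by case: wo => _ [_]; apply. Qed.

Lemma le_lt_trans {x y z} : x = y \/ lt x y -> lt y z -> lt x z.
Proof. by case=> [->//|]; apply: lt_trans. Qed.

Lemma regular_small_bounded {X A : set T} : regular_card lt X ->
  A `<=` X -> ~ (X #<= A) -> exists2 b, X b & A `<=` seg lt b.
Proof.
move=> Xreg AX nXA; apply: contrapT => unbounded; apply: nXA.
suff /Xreg.2 /card_eqPle [] : cofinal_in lt A X by [].
split=> // b Xb; have [a [Aa nab]] : exists a, A a /\ ~ lt a b.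
  apply: contrapT => h; apply: unbounded; exists b => // x Ax.
  by apply: contrapT => nx; apply: h; exists x.
exists a => //; case: (lt_total a b) => [->|[ab|ba]]; [by left|by []|by right].
Qed.

Lemma seg_card_lt s t : is_cardinal lt (seg lt s) -> lt t s ->
  card_lt (seg lt t) (seg lt s).
Proof.
move=> scard ts; have le : seg lt t #<= seg lt s.
  by apply: subset_card_le => y yt; exact: lt_trans yt ts.
by split=> // ge; apply: (scard t ts); exact: Cantor_Bernstein.
Qed.

Lemma club_setT : club lt [set: T].
Proof. by split=> //; split=> // b _; exists b => //; left. Qed.

Definition pmax (p : T * T) : T := if pselect (lt p.1 p.2) then p.2 else p.1.

(* Goedel's order: by maximum first, then lexicographically; the predecessors
   of p all lie in a square seg m x seg m with pmax p < m. *)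
Definition maxlex (p q : T * T) : Prop := lt (pmax p) (pmax q) \/
  (pmax p = pmax q /\ (lt p.1 q.1 \/ (p.1 = q.1 /\ lt p.2 q.2))).

Lemma pmax_ge1 p : p.1 = pmax p \/ lt p.1 (pmax p).
Proof. by rewrite /pmax; case: pselect => /=; [right|left]. Qed.

Lemma pmax_ge2 p : p.2 = pmax p \/ lt p.2 (pmax p).
Proof.
rewrite /pmax; case: pselect => /= [_|n12]; first by left.
by case: (lt_total p.2 p.1) => [|[]]; [left|right|].
Qed.

Lemma maxlex_wf : well_founded maxlex.
Proof.
case: wo => wf _.
suff acc m x y : pmax (x, y) = m -> Acc maxlex (x, y) by case=> x y; exact: acc.
elim/(well_founded_induction wf): m x y => m IHm x.
elim/(well_founded_induction wf): x => x IHx y.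
elim/(well_founded_induction wf): y => y IHy Em.
constructor=> -[x' y'] [|[e [|[/= ex]]]] /=; rewrite ?Em => lt'.
- exact: IHm lt' _ _ erefl.
- by apply: IHx; rewrite ?e.
- by subst x'; apply: IHy; rewrite ?e.
Qed.

Lemma maxlex_total p q : p = q \/ maxlex p q \/ maxlex q p.
Proof.
case: p q => [x y] [x' y']; rewrite /maxlex /=.
case: (lt_total (pmax (x, y)) (pmax (x', y'))) => [e|[lt'|lt']]; last first.
- by right; right; left.
- by right; left; left.
case: (lt_total x x') => [ex|[lt'|lt']]; last first.
- by right; right; right; split=> //; left.
- by right; left; right; split=> //; left.
case: (lt_total y y') => [ey|[lt'|lt']]; first by left; rewrite ex ey.
- by right; left; right; split=> //; right.
- by right; right; right; split=> //; right.
Qed.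

Section Kappa.
Hypothesis kappa_reg : regular_card lt [set: T].
Hypothesis kappa_unc : ~ countable [set: T].

Lemma kappa_inhabited : inhabited T.
Proof.
apply: contrapT => nT; apply: kappa_unc.
suff -> : [set: T] = set0 by exact: countable0.
by apply/seteqP; split=> // x; case: nT.
Qed.

Lemma small_bounded {A : set T} : ~ ([set: T] #<= A) -> exists b, A `<=` seg lt b.
Proof. by move=> /(regular_small_bounded kappa_reg (@subsetT _ A)) [b _]; exists b. Qed.

Lemma seg_small m : ~ ([set: T] #<= seg lt m).
Proof. by move=> ge; apply: (kappa_reg.1 m) => //; exact: Cantor_Bernstein (card_leT _) ge. Qed.

Lemma small_union_bounded {I : Type} {L : set I} {G : I -> set T} :
  ~ ([set: T] #<= L) -> (forall i, L i -> ~ ([set: T] #<= G i)) ->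
  exists b, forall i, L i -> G i `<=` seg lt b.
Proof.
move=> smallL smallG; have [t0] := kappa_inhabited.
have /choice [f fP] : forall i, exists b, L i -> G i `<=` seg lt b.
  move=> i; have [Li|] := pselect (L i); last by exists t0.
  by have [b] := small_bounded (smallG i Li); exists b.
have [b fb] : exists b, f @` L `<=` seg lt b.
  by apply: small_bounded => ge; apply/smallL/(card_le_trans ge)/card_image_le.
by exists b => i Li x Gx; apply: lt_trans (fP i Li x Gx) (fb _ _); exists i.
Qed.

Lemma no_max m : exists m', lt m m'.
Proof.
apply: contrapT => nm; apply: kappa_unc.
have cof : cofinal_in lt [set m] setT.
  split=> // b _; exists m => //; case: (lt_total b m) => [->|[bm|mb]].
  - by left.
  - by right.
  - by case: nm; exists b.
have /card_eqPle [_ ge] := kappa_reg.2 _ cof.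
exact: sub_countable ge (countable1 m).
Qed.

Lemma injective_by_recursion (P : Type) (R : P -> P -> Prop) :
  well_founded R -> (forall p q, p = q \/ R p q \/ R q p) ->
  (forall (f : P -> T) p, exists b, forall q, R q p -> lt (f q) b) ->
  exists h : P -> T, injective h.
Proof.
move=> Rwf Rtotal Rbounded; have [t0] := kappa_inhabited.
(* [h p] avoids the values of [h] below [p]; the default [t0] is never used
   because a bound of these values is such a fresh value. *)
pose fresh p (f : forall q, R q p -> T) :=
  @xget {classic T} t0 [set t | ~ exists q (Rqp : R q p), f q Rqp = t].
pose h := Fix Rwf (fun _ => T) fresh.
have hE p : h p = @xget {classic T} t0 [set t | ~ exists2 q, R q p & h q = t].
  rewrite /h Fix_eq => [|x f g fg]; last first.
    have -> // : f = g.
    by apply: functional_extensionality_dep => q; apply: functional_extensionality_dep.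
  rewrite /fresh; f_equal; apply: funext => t; apply: propext.
  by split=> nex [q]; [move=> Rq e|move=> [Rq e]]; apply: nex; exists q => //; exists Rq.
have hfresh p : ~ exists2 q, R q p & h q = h p.
  have [b hb] := Rbounded h p.
  rewrite hE; apply: (@xgetPex {classic T} t0 [set t | ~ exists2 q, R q p & h q = t]).
  by exists b => -[q Rq e]; apply: (lt_irrefl b); rewrite -{1}e; exact: hb.
exists h => p q e; case: (Rtotal p q) => [//|[Rpq|Rqp]].
- by case: (hfresh q); exists p.
- by case: (hfresh p); exists q.
Qed.

Lemma maxlex_bounded (f : T * T -> T) p : exists b, forall q, maxlex q p -> lt (f q) b.
Proof.
have [m pm] := no_max (pmax p).
have [b bf] := @small_union_bounded _ (seg lt m) (fun x => (fun y => f (x, y)) @` seg lt m)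
  (seg_small m) (fun x _ ge => seg_small m (card_le_trans ge (card_image_le _ _))).
exists b => -[x y] qp.
have qm : lt (pmax (x, y)) m.
  by apply: le_lt_trans pm; case: qp => [|[->]]; [right|left].
apply: (bf x); first exact: le_lt_trans (pmax_ge1 (x, y)) qm.
by exists y => //; exact: le_lt_trans (pmax_ge2 (x, y)) qm.
Qed.

Lemma pairing : exists h : T * T -> T, injective h.
Proof. exact: injective_by_recursion maxlex_wf maxlex_total maxlex_bounded. Qed.

Lemma card_triple_le : [set: T * T * T] #<= [set: T].
Proof.
have [h hinj] := pairing.
pose h3 (w : T * T * T) := h (h w.1, w.2).
have h3inj : injective h3 by move=> [[? ?] ?] [[? ?] ?] /hinj [] /hinj [-> ->] ->.
have /card_eqPle [_ le] := @inj_card_eq _ _ [set: T * T * T] _ (in2W h3inj).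
exact: card_le_trans le (card_leT _).
Qed.

Lemma small_cover_large (Z : set (set T)) :
  (forall z, Z z -> ~ ([set: T] #<= z)) -> (forall b, exists2 z, Z z & z b) ->
  [set: T] #<= Z.
Proof.
move=> smallZ coverZ; apply: contrapT => smallZZ.
have [b bZ] := small_union_bounded smallZZ smallZ.
have [z Zz zb] := coverZ b.
exact: lt_irrefl (bZ z Zz b zb).
Qed.

Section Sigma.
Context {s : T}.
Hypothesis sigma_reg : regular_card lt (seg lt s).
Hypothesis sigma_unc : ~ countable (seg lt s).

Lemma P_lt_set1 b : P_lt (seg lt s) [set: T] [set b].
Proof.
have [x0 sx0] : seg lt s !=set0.
  apply/set0P/eqP => s0; apply: sigma_unc; rewrite s0; exact: countable0.
split=> //; split; last by move=> ge; apply/sigma_unc/(sub_countable ge)/countable1.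
have /card_eqPle [le _] := eq_card1 b x0.
by apply: card_le_trans le (subset_card_le _) => _ ->.
Qed.

Lemma cov_family_large (Z : set (set T)) :
  cov_family [set: T] (seg lt s) (seg lt s) `I_2 Z -> [set: T] #<= Z.
Proof.
move=> [ZP cover]; apply: small_cover_large => [z /ZP [_ /card_lt_small]//|b].
have [Q [[QZ _] coverQ]] := cover _ (P_lt_set1 b).
by have [q Qq qb] := coverQ b erefl; exists q => //; exact: QZ.
Qed.

Lemma small_set_in_image_of_seg (a : set T) : card_lt a (seg lt s) ->
  exists2 th, lt th s & exists g : T -> T, a `<=` g @` seg lt th.
Proof.
move=> [aleq nsa]; have /card_subP [C Ca Cs] := aleq.
have /card_eqPle [Cle aleC] := Ca.
have nsC : ~ (seg lt s #<= C) by move=> ge; apply/nsa/(card_le_trans ge).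
have [th ths Cth] := regular_small_bounded sigma_reg Cs nsC.
exists th => //; case/pfcard_geP: aleC => [->|/surjfunPex [g ->]].
- by exists id.
- by exists g; exact: image_subset.
Qed.

Definition guess_index (d i th : T) : Prop :=
  [/\ is_limit lt d, ~ lt d s, lt i d & lt th s].

Lemma curlywedge_catches_small_sets {S : set T} : curlywedge_minus_NS lt s S ->
  exists Cf : T -> T -> set (set T),
    (forall d i, is_limit lt d -> ~ lt d s -> lt i d ->
       cofinal_family (Cf d i) (P_lt (seg lt s) (seg lt d))) /\
    forall a, card_lt a (seg lt s) -> exists d i th, guess_index d i th /\
       forall c, Cf d i c -> seg lt th `<=` c -> a `<=` c.
Proof.
case=> Cf [Cf_cof Cf_guess]; exists Cf; split=> // a /small_set_in_image_of_seg.
move=> [th ths [g ag]]; have [t0] := kappa_inhabited.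
have [F FP] := singleton_extension t0 g.
pose D := [set x | P_lt (seg lt s) [set: T] x /\
                   forall e, finite_set e -> e `<=` x -> x (F e)].
have DP : D `<=` P_lt (seg lt s) [set: T] by move=> x [].
have Dclub : gen_club (seg lt s) [set: T] D by exists F; split.
(* The guessing set is stationary, so in particular it meets the club [set: T]. *)
have [d [[[dlim [nds [i id CfD]]] _] _]] := Cf_guess D DP Dclub _ club_setT.
exists d, i, th; split=> // c /CfD [_ Fclosed] thc y /ag [xi xith <-].
by rewrite -FP; apply: Fclosed => [|_ ->]; [exact: finite_set1|exact: thc].
Qed.

Lemma curlywedge_small_cover {S : set T} : curlywedge_minus_NS lt s S ->
  exists2 Z, cov_family [set: T] (seg lt s) (seg lt s) `I_2 Z & Z #<= [set: T].
Proof.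
case/curlywedge_catches_small_sets=> Cf [Cf_cof Cf_catch].
pose valid (w : T * T * T) := guess_index w.1.1 w.1.2 w.2.
have /choice [z zP] : forall w, exists c,
    valid w -> Cf w.1.1 w.1.2 c /\ seg lt w.2 `<=` c.
  move=> [[d i] th]; have [[/= dlim nds id ths]|] := pselect (valid (d, i, th));
    last by exists set0.
  have segP : P_lt (seg lt s) (seg lt d) (seg lt th).
    split; last exact: seg_card_lt sigma_reg.1 ths.
    move=> y yth; have ys := lt_trans yth ths.
    by case: (lt_total d s) => [ds|[ds|sd]]; [rewrite ds|case: nds|exact: lt_trans sd].
  by have [c] := (Cf_cof d i dlim nds id).2 _ segP; exists c.
exists (z @` valid); last first.
  apply: card_le_trans (card_image_le z valid) _.
  exact: card_le_trans (card_leT _) card_triple_le.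
split=> [_ [w wi <-]|a [_ /Cf_catch [d [i [th [di cover]]]]]].
  have [[dlim nds id _] [zC _]] := (wi, zP w wi).
  by have [_ ?] := (Cf_cof _ _ dlim nds id).1 _ zC.
have [zC thz] := zP (d, i, th) di.
exists [set z (d, i, th)]; split.
  split; first by move=> _ ->; exists (d, i, th).
  have one : [set z (d, i, th)] #= `I_1 := card_set1.
  by split; [rewrite (card_le_eql one) card_le_II|rewrite (card_le_eqr one) card_le_II].
by move=> y ay; exists (z (d, i, th)) => //; exact: cover.
Qed.

End Sigma.

End Kappa.
End WellOrder.

Theorem corollary4p12 (T : Type) (lt : T -> T -> Prop)
  (wo : is_wellorder lt)
  (kappa_reg : regular_card lt (@setT T)) (kappa_unc : ~ countable (@setT T))
  (s : T) (sigma_reg : regular_card lt (seg lt s)) (sigma_unc : ~ countable (seg lt s))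
  (S : set T) (hSE : S `<=` E_lt lt s) (hSstat : stationary lt S)
  (hw : curlywedge_minus_NS lt s S) :
  cov_eq (@setT T) (seg lt s) (seg lt s) `I_2 (@setT T).
Proof.
have large := cov_family_large wo kappa_reg kappa_unc sigma_unc.
have [Z covZ ZleT] := curlywedge_small_cover wo kappa_reg kappa_unc sigma_reg hw.
split=> //; exists Z; split=> //; exact: Cantor_Bernstein ZleT (large Z covZ).
Qed.
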